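(* If $E$ and $F$ are non-degenerated $C$-pseudo-cones with $E=z_1+\mathbb{A}_1$ and $F=z_2+\mathbb{A}_2$ ($z_i\in C$, $\mathbb{A}_i$ $C$-asymptotic sets), then $E+F=(z_1+z_2)+(\mathbb{A}_1+\mathbb{A}_2)$ is a non-degenerated $C$-pseudo-cone with $C$-starting point $z_1+z_2$.
   Context: $C\subset\mathbb{R}^n$ ($n\ge2$) is a pointed closed convex cone with nonempty interior. A $C$-pseudo-cone is a nonempty closed convex set $E$ with $o\notin E$, $\lambda x\in E$ for all $x\in E,\lambda\ge1$, and recession cone equal to $C$. A $C$-asymptotic set is an unbounded closed convex set $\mathbb{A}\subset C$ with nonempty interior and $o\notin\mathbb{A}$ such that $\lim_{x\in\partial\mathbb{A},|x|\to\infty}d(x,\partial C)=0$. A non-degenerated $C$-pseudo-cone is a $C$-pseudo-cone $E$ that can be written as $E=z+\mathbb{A}$ with $z\in C$ and $\mathbb{A}$ a $C$-asymptotic set (this decomposition is unique); $z$ is called its $C$-starting point. *)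

From HB Require Import structures.
From mathcomp Require Import all_boot all_order all_algebra.
From mathcomp Require Import all_classical all_reals all_analysis.
Set Implicit Arguments. Unset Strict Implicit. Unset Printing Implicit Defensive.
Import Order.TTheory GRing.Theory Num.Theory.
Import numFieldNormedType.Exports.
Local Open Scope classical_set_scope.
Local Open Scope ring_scope.

Section Defs.
Variables (R : realType) (n : nat).
Notation V := 'rV[R]_n.

Definition enorm (x : V) : R := Num.sqrt (\sum_(i < n) x ord0 i ^+ 2).

Definition pc_edist (x : V) (S : set V) : R := inf [set enorm (x - y) | y in S].

Definition mink_sum (A B : set V) : set V :=
  [set z | exists x y, A x /\ B y /\ z = x + y].
Definition translate (z : V) (A : set V) : set V := [set z + a | a in A].

Definition pc_convex (A : set V) : Prop :=
  forall x y t, A x -> A y -> 0 <= t -> t <= 1 -> A (t *: x + (1 - t) *: y).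

Definition closed_convex_cone (C : set V) : Prop :=
  closed C /\ C 0 /\ (forall x y, C x -> C y -> C (x + y)) /\
  (forall x (l : R), C x -> 0 <= l -> C (l *: x)).

Definition pointed (C : set V) : Prop :=
  forall x, C x -> C (- x) -> x = 0.

Definition good_cone (C : set V) : Prop :=
  closed_convex_cone C /\ pointed C /\ interior C !=set0.

Definition recession_cone (E : set V) : set V :=
  [set y | forall x (t : R), E x -> 0 <= t -> E (x + t *: y)].

Definition boundary (A : set V) : set V := closure A `\` interior A.

Definition pc_bounded (A : set V) : Prop :=
  exists M : R, forall x, A x -> enorm x <= M.

Definition pseudo_cone (C E : set V) : Prop :=
  E !=set0 /\ closed E /\ pc_convex E /\ ~ E 0 /\
  (forall x (l : R), E x -> 1 <= l -> E (l *: x)) /\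
  recession_cone E = C.

Definition asymptotic_set (C A : set V) : Prop :=
  ~ pc_bounded A /\ closed A /\ pc_convex A /\ A `<=` C /\
  interior A !=set0 /\ ~ A 0 /\
  (forall eps : R, 0 < eps -> exists M : R,
     forall x, boundary A x -> M < enorm x -> pc_edist x (boundary C) < eps).

Definition nondeg_pseudo_cone_start (C E : set V) (z : V) : Prop :=
  pseudo_cone C E /\ C z /\
  exists A, asymptotic_set C A /\ E = translate z A.

End Defs.

(* Translations commute with Minkowski sums, so the content is that A1 + A2 is
   again C-asymptotic and E + F again a C-pseudo-cone.  Pointedness of C gives
   d |x| <= |x + y| on C, so summands of a bounded sum from C stay bounded and
   sums of closed subsets of C are closed.  For the asymptotic condition, a
   C-asymptotic set A with A + C in A "fills" C: it contains every large point
   of C at distance >= eps from the boundary of C, because the ray through such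
   a point x enters A, and where it crosses the boundary of A it is eps-close to
   the dilation-invariant boundary of C, hence so is x.  Filling passes to
   A1 + A2 through x = x/2 + x/2, and a filling subset of C is asymptotic: a
   large boundary point far from the boundary of C would have a whole
   neighbourhood in the set. *)

From HB Require Import structures.
From mathcomp Require Import all_boot all_order all_algebra.
From mathcomp Require Import all_classical all_reals all_analysis.
From mathcomp Require Import ring lra.
Set Implicit Arguments. Unset Strict Implicit. Unset Printing Implicit Defensive.
Import Order.TTheory GRing.Theory Num.Theory.
Import numFieldNormedType.Exports.
Local Open Scope classical_set_scope.
Local Open Scope ring_scope.

Section EuclideanNorm.
Variables (R : realType) (n : nat).
Implicit Types x y : 'rV[R]_n.

Lemma enorm_ge0 x : 0 <= enorm x.
Proof. exact: sqrtr_ge0. Qed.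

Lemma enorm_sqr x : enorm x ^+ 2 = \sum_(i < n) x ord0 i ^+ 2.
Proof. by rewrite sqr_sqrtr // sumr_ge0 // => i _; rewrite sqr_ge0. Qed.

Lemma enormZ (a : R) x : enorm (a *: x) = `|a| * enorm x.
Proof.
rewrite /enorm; under eq_bigr do rewrite mxE exprMn.
by rewrite -mulr_sumr sqrtrM ?sqr_ge0 // sqrtr_sqr.
Qed.

Lemma enorm0 : enorm (0 : 'rV[R]_n) = 0.
Proof. by rewrite -(scale0r 0) enormZ normr0 mul0r. Qed.

Lemma enormN x : enorm (- x) = enorm x.
Proof. by rewrite -scaleN1r enormZ normrN normr1 mul1r. Qed.

Lemma enorm0_eq0 x : enorm x = 0 -> x = 0.
Proof.
move=> x0; have /eqP : \sum_(i < n) x ord0 i ^+ 2 = 0 by rewrite -enorm_sqr x0 expr0n.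
rewrite psumr_eq0 => [/allP x_0|i _]; last exact: sqr_ge0.
apply/rowP => i; rewrite mxE; apply/eqP.
by rewrite -sqrf_eq0; apply: x_0; rewrite mem_index_enum.
Qed.

Lemma dot_le_enormM x y : \sum_(i < n) x ord0 i * y ord0 i <= enorm x * enorm y.
Proof.
set d := \sum_(i < n) _; set a := enorm x; set b := enorm y.
have [a0|a_neq0] := eqVneq a 0.
  by rewrite a0 mul0r /d (enorm0_eq0 a0) big1 // => i _; rewrite mxE mul0r.
have [b0|b_neq0] := eqVneq b 0.
  by rewrite b0 mulr0 /d (enorm0_eq0 b0) big1 // => i _; rewrite mxE mulr0.
have ab_gt0 : 0 < a * b by rewrite mulr_gt0 // lt_def ?a_neq0 ?b_neq0 ?enorm_ge0.
have : 0 <= \sum_(i < n) (b * x ord0 i - a * y ord0 i) ^+ 2.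
  by apply: sumr_ge0 => i _; rewrite sqr_ge0.
rewrite (_ : \sum_(i < n) _ = b ^+ 2 * \sum_(i < n) x ord0 i ^+ 2
    - 2 * b * a * d + a ^+ 2 * \sum_(i < n) y ord0 i ^+ 2); last first.
  by rewrite /d !mulr_sumr -sumrB -big_split /=; apply: eq_bigr => i _; ring.
rewrite -!enorm_sqr -/a -/b.
move=> ge0; rewrite -(ler_pM2l ab_gt0) -subr_ge0.
have -> : a * b * (a * b) - a * b * d =
  (b ^+ 2 * a ^+ 2 - 2 * b * a * d + a ^+ 2 * b ^+ 2) / 2 by field.
exact: divr_ge0.
Qed.

Lemma enormD x y : enorm (x + y) <= enorm x + enorm y.
Proof.
rewrite -(@ler_pXn2r _ 2) ?nnegrE ?addr_ge0 ?enorm_ge0 //.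
rewrite enorm_sqr sqrrD !enorm_sqr; under eq_bigr do rewrite mxE sqrrD.
by rewrite !big_split /= lerD2r lerD2l mulr2n lerD ?dot_le_enormM.
Qed.

Lemma enorm_le_mx_norm x : enorm x <= n%:R * `|x|.
Proof.
rewrite -(@ler_pXn2r _ 2) ?nnegrE ?enorm_ge0 ?mulr_ge0 // enorm_sqr.
apply: (@le_trans _ _ (\sum_(i < n) `|x| ^+ 2)).
  apply: ler_sum => i _; rewrite -real_normK ?num_real // lerXn2r ?nnegrE //.
  by rewrite [leRHS]/Num.norm /= mx_normrE (le_trans _ (le_bigmax _ _ (ord0, i))).
rewrite sumr_const card_ord -[_ *+ n]mulr_natl exprMn ler_wpM2r ?sqr_ge0 //.
by rewrite -natrX ler_nat; case: n => // k; rewrite expnS leq_pmulr.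
Qed.

Lemma enorm_small (e : R) : 0 < e ->
  exists2 d : R, 0 < d & forall x, `|x| < d -> enorm x < e.
Proof.
move=> e_gt0; have n1_gt0 : 0 < n%:R + 1 :> R by rewrite ltr_pwDr.
exists (e / (n%:R + 1)) => [|x x_lt]; first exact: divr_gt0.
apply: (le_lt_trans (enorm_le_mx_norm x)).
rewrite ltr_pdivlMr // in x_lt; apply: le_lt_trans x_lt.
by rewrite mulrC ler_wpM2l // lerDl.
Qed.

End EuclideanNorm.

Section RowVectors.
Variables (R : realType) (n : nat).
Local Notation V := 'rV[R]_n.
Implicit Types (x y z : V) (A B S : set V).

Lemma nbhs_normP x A :
  nbhs x A <-> exists2 e : R, 0 < e & forall y, `|x - y| < e -> A y.
Proof.
rewrite nbhs_ballP; split => -[e e_gt0 xeA]; exists e => // y.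
  by move=> xy; apply: xeA; rewrite -ball_normE.
by rewrite -ball_normE; apply: xeA.
Qed.

Lemma closed_norm_le (r : R) : closed [set x : V | `|x| <= r].
Proof.
apply: (@preimage_closed _ _ (fun x : V => `|x|) [set t : R | t <= r]); last exact: closed_le.
by move=> x _; apply: norm_continuous.
Qed.

Lemma bounded_norm_le A (r : R) : (forall x, A x -> `|x| <= r) -> bounded_set A.
Proof.
move=> Ar; exists r; split => [|M rM x Ax]; first exact: num_real.
exact: le_trans (Ar x Ax) (ltW rM).
Qed.

Lemma compact_closed_norm_le S (r : R) :
  closed S -> compact (S `&` [set x | `|x| <= r]).
Proof.
move=> clS; apply: bounded_closed_compact; first by apply: (bounded_norm_le (r := r)) => x [].
by apply: closedI => //; exact: closed_norm_le.
Qed.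

Lemma compact_mink_sum A B : compact A -> compact B -> compact (mink_sum A B).
Proof.
move=> cA cB; have -> : mink_sum A B = (fun p : V * V => p.1 + p.2) @` (A `*` B).
  apply/seteqP; split => [_ [a [b [Aa [Bb ->]]]]|_ [[a b] [Aa Bb] <-]].
    by exists (a, b).
  by exists a, b.
by apply: continuous_compact; [exact/continuous_subspaceT/add_continuous|exact: compact_setX].
Qed.

Lemma segment_meets_boundary S x v (T : R) : closed S -> ~ S x -> 0 < T ->
  S (x + T *: v) -> exists s : R, [/\ 0 < s, s <= T & boundary S (x + s *: v)].
Proof.
move=> clS Sx T_gt0 STv.
have Dv (a b : R) : x + a *: v - (x + b *: v) = (a - b) *: v.
  by rewrite opprD addrACA subrr add0r scalerBl.
have small (e : R) : 0 < e -> e / (`|v| + 1) * `|v| < e.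
  move=> e_gt0; rewrite mulrAC ltr_pdivrMr ?ltr_pwDr //.
  by rewrite ltr_pM2l // ltrDl.
have scale_gt0 (e : R) : 0 < e -> 0 < e / (`|v| + 1).
  by move=> e_gt0; rewrite divr_gt0 // ltr_pwDr.
pose hits := [set t : R | 0 <= t /\ t <= T /\ S (x + t *: v)].
have hitsT : hits T by split; [exact: ltW|split].
have hits_lb : has_lbound hits by exists 0 => t [].
pose s := inf hits.
have s_ge0 : 0 <= s by apply: lb_le_inf => [|t []]; first by exists T.
have s_leT : s <= T by apply: ge_inf.
have Ss : S (x + s *: v).
  rewrite ((closure_id S).1 clS) => B /nbhs_normP[e e_gt0 eB].
  have [t hits_t t_lt] := inf_adherent (scale_gt0 _ e_gt0) (conj (ex_intro _ T hitsT) hits_lb).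
  exists (x + t *: v); split; first by case: hits_t => _ [].
  apply: eB; rewrite Dv normrZ; apply: le_lt_trans (small _ e_gt0).
  rewrite ler_wpM2r // distrC ger0_norm ?subr_ge0 ?(ge_inf hits_lb) //.
  by rewrite lerBlDr addrC ltW.
have s_gt0 : 0 < s.
  by rewrite lt_def s_ge0 andbT; apply: contraPneq Sx => s0; rewrite -[x]addr0 -(scale0r v) -s0.
exists s; split => //; split; first exact: subset_closure.
(* points of the segment just before [s] miss [S], so [x + s v] is not interior *)
move=> /nbhs_normP[e e_gt0 eS].
pose d := Order.min s (e / (`|v| + 1)) / 2.
have d_gt0 : 0 < d by rewrite divr_gt0 // lt_min s_gt0 scale_gt0.
have d_lt : d < Order.min s (e / (`|v| + 1)).
  by rewrite /d ltr_pdivrMr // ltr_pMr // ?ltr1n // lt_min s_gt0 scale_gt0.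
have : hits (s - d).
  split; first by rewrite subr_ge0 ltW // (lt_le_trans d_lt) // ge_min lexx.
  split; first by rewrite lerBlDr (le_trans s_leT) // lerDl ltW.
  apply: eS; rewrite Dv opprB addrC subrK normrZ gtr0_norm //.
  apply: le_lt_trans (small _ e_gt0); rewrite ler_wpM2r // ltW //.
  by rewrite (lt_le_trans d_lt) // ge_min lexx orbT.
move/(ge_inf hits_lb); rewrite -/s lerBrDr gerDl => d_le0.
by move: d_gt0; rewrite ltNge d_le0.
Qed.

Lemma edist_le x S c : S c -> pc_edist x S <= enorm (x - c).
Proof.
move=> Sc; apply: ge_inf; last by exists c.
by exists 0 => _ [d _ <-]; apply: enorm_ge0.
Qed.

Lemma edist_ltP x S (e : R) : S !=set0 -> pc_edist x S < e ->
  exists2 c, S c & enorm (x - c) < e.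
Proof.
move=> [c Sc] /inf_lt[]; first by exists (enorm (x - c)), c.
by move=> _ [d Sd <-]; exists d.
Qed.

Lemma edist_set0 x : pc_edist x set0 = 0.
Proof. by rewrite /pc_edist image_set0 inf0. Qed.

Definition far_from (e : R) S x := forall c, S c -> e <= enorm (x - c).

Lemma far_from_edist (e : R) S x : e <= pc_edist x S -> far_from e S x.
Proof. by move=> e_le c Sc; apply: le_trans e_le (edist_le _ Sc). Qed.

Lemma mink_sum_translate z1 z2 A B :
  mink_sum (translate z1 A) (translate z2 B) = translate (z1 + z2) (mink_sum A B).
Proof.
apply/seteqP; split => [_ [_ [_ [[a Aa <-] [[b Bb <-] ->]]]]|_ [_ [a [b [Aa [Bb ->]]]] <-]].
  by exists (a + b); [exists a, b | rewrite addrACA].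
by exists (z1 + a), (z2 + b); split; [exists a | split; [exists b | rewrite addrACA]].
Qed.

Lemma convex_mink_sum A B : pc_convex A -> pc_convex B -> pc_convex (mink_sum A B).
Proof.
move=> cvA cvB _ _ t [a [b [Aa [Bb ->]]]] [a' [b' [Aa' [Bb' ->]]]] t0 t1.
exists (t *: a + (1 - t) *: a'), (t *: b + (1 - t) *: b').
by split; [exact: cvA | split; [exact: cvB | rewrite !scalerDr addrACA]].
Qed.

Lemma interior_mink_sum A B :
  interior A !=set0 -> B !=set0 -> interior (mink_sum A B) !=set0.
Proof.
move=> [a /nbhs_normP[e e_gt0 aeA]] [b Bb]; exists (a + b).
apply/nbhs_normP; exists e => // y ab_y; exists (y - b), b.
by split; [apply: aeA; rewrite opprB addrA | split; last rewrite subrK].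
Qed.

Lemma recession_cone_translate z A : recession_cone (translate z A) = recession_cone A.
Proof.
apply/seteqP; split => y recy a t Aa t_ge0.
  have [a' Aa'] := recy (z + a) t (ex_intro2 _ _ a Aa erefl) t_ge0.
  by rewrite -addrA => /addrI <-.
case: Aa => a' Aa' <-; exists (a' + t *: y); first exact: recy.
by rewrite addrA.
Qed.

Lemma recession_cone_mink_suml A B : recession_cone A `<=` recession_cone (mink_sum A B).
Proof.
move=> y recy _ t [a [b [Aa [Bb ->]]]] t_ge0.
by exists (a + t *: y), b; split; [exact: recy | split; last rewrite addrAC].
Qed.

End RowVectors.

Section PointedCone.
Variables (R : realType) (n : nat).
Local Notation V := 'rV[R]_n.
Implicit Types (x y z : V) (A P Q S : set V).
Variable C : set V.
Hypotheses (coneC : closed_convex_cone C) (pointedC : pointed C).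

Let closedC : closed C := coneC.1.
Let coneD x y : C x -> C y -> C (x + y) := coneC.2.2.1 x y.
Let coneZ x (l : R) : C x -> 0 <= l -> C (l *: x) := coneC.2.2.2 x l.

Lemma pointed_unit_sum_bound : exists2 e : R, 0 < e &
  forall x y, C x -> C y -> `|x| = 1 -> `|y| <= 2 -> e <= `|x + y|.
Proof.
pose K := C `&` [set x : V | `|x| = 1].
pose Y := C `&` [set x : V | `|x| <= 2].
pose N := (fun p : V * V => `|p.1 + p.2|) @` (K `*` Y).
have cK : compact K.
  apply: bounded_closed_compact; first by apply: (bounded_norm_le (r := 1)) => x [_ ->].
  apply: closedI; first exact: closedC.
  apply: (@preimage_closed _ _ (fun x : V => `|x|) [set t : R | t = 1]); last exact: closed_eq.
  by move=> x _; apply: norm_continuous.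
have cY : compact Y := compact_closed_norm_le (r := 2) closedC.
have clN : closed N.
  apply: compact_closed; first exact: norm_hausdorff.
  apply: continuous_compact; last exact: compact_setX.
  apply: continuous_subspaceT => p; apply: continuous_comp; first exact: add_continuous.
  exact: norm_continuous.
(* [N] misses [0] because [C] is pointed, so it misses a whole interval around [0] *)
have N0 : ~ N 0.
  move=> [[x y] [[Cx x1] [Cy _]] /= /eqP]; rewrite normr_eq0 addr_eq0 => /eqP xE.
  have x0 : x = 0 by apply: pointedC; rewrite // xE opprK.
  by move: x1; rewrite /= x0 normr0 => /eqP; rewrite eq_sym oner_eq0.
have /nbhs_ballP[e e_gt0 eN] := open_nbhs_nbhs (conj (closed_openC clN) N0).
exists e => // x y Cx Cy x1 y_le2; rewrite leNgt; apply/negP => xy_lt.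
apply: (eN `|x + y|); first by rewrite -ball_normE /= sub0r normrN normr_id.
by exists (x, y).
Qed.

Lemma pointed_cone_norm_sum : exists2 d : R, 0 < d &
  forall x y, C x -> C y -> d * `|x| <= `|x + y|.
Proof.
have [e e_gt0 unit_bound] := pointed_unit_sum_bound.
exists (Order.min e 1) => [|x y Cx Cy]; first by rewrite lt_min e_gt0 ltr01.
have [->|x_neq0] := eqVneq x 0; first by rewrite normr0 mulr0 normr_ge0.
have nx_gt0 : 0 < `|x| by rewrite normr_gt0.
pose u := `|x|^-1 *: x; pose w := `|x|^-1 *: y.
have u1 : `|u| = 1 by rewrite normrZ normrV ?unitfE ?normr_eq0 // normr_id mulVf ?normr_eq0.
have Cu : C u by apply: coneZ; rewrite // invr_ge0 ltW.
have Cw : C w by apply: coneZ; rewrite // invr_ge0 ltW.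
have uw_bound : Order.min e 1 <= `|u + w|.
  have [w_le2|w_gt2] := leP `|w| 2; first by rewrite ge_min unit_bound.
  rewrite ge_min; apply/orP; right.
  rewrite addrC (le_trans _ (lerB_normD w u)) // u1 lerBrDl.
  by apply: le_trans (ltW w_gt2); rewrite -mulr2n.
have -> : x + y = `|x| *: (u + w) by rewrite scalerDr !scalerA divff ?normr_eq0 // !scale1r.
by rewrite normrZ normr_id mulrC ler_wpM2l.
Qed.

Lemma closed_mink_sum P Q : closed P -> closed Q -> P `<=` C -> Q `<=` C ->
  closed (mink_sum P Q).
Proof.
move=> clP clQ PC QC; have [d d_gt0 dbound] := pointed_cone_norm_sum.
rewrite closure_id; apply/seteqP; split => [|p clp]; first exact: subset_closure.
(* near [p], summands are bounded, so [p] is a limit of sums from a compact set *)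
pose L := (`|p| + 1) / d.
pose W := mink_sum (P `&` [set x : V | `|x| <= L])
                   (Q `&` [set x : V | `|x| <= L + (`|p| + 1)]).
have clW : closed W.
  apply: compact_closed; first exact: norm_hausdorff.
  by apply: compact_mink_sum; apply: compact_closed_norm_le.
suff : closure W p by rewrite -((closure_id W).1 clW) => -[a [b [[Pa _] [[Qb _] ->]]]]; exists a, b.
move=> B /nbhs_normP[e e_gt0 peB].
have : nbhs p [set q : V | `|p - q| < Order.min e 1].
  by apply/nbhs_normP; exists (Order.min e 1); rewrite ?lt_min ?e_gt0 ?ltr01.
move=> /clp[_ [[a [b [Pa [Qb ->]]]]]]; rewrite /= lt_min => /andP[pab_lte pab_lt1].
have ab_le : `|a + b| <= `|p| + 1.
  by rewrite -[a + b](subKr p) (le_trans (ler_normB _ _)) // lerD2l ltW.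
have a_le : `|a| <= L by rewrite ler_pdivlMr // mulrC (le_trans (dbound _ _ (PC a Pa) (QC b Qb))).
exists (a + b); split; last exact: peB.
exists a, b; split => //; split => //; split => //=.
by rewrite -[b](addKr a) addrC (le_trans (ler_normB _ _)) // addrC lerD.
Qed.

Lemma mink_sum_sub_cone P Q : P `<=` C -> Q `<=` C -> mink_sum P Q `<=` C.
Proof. by move=> PC QC _ [a [b [Pa [Qb ->]]]]; apply: coneD; [apply: PC | apply: QC]. Qed.

Lemma translate_sub_cone z P : C z -> P `<=` C -> translate z P `<=` C.
Proof. by move=> Cz PC _ [a Pa <-]; apply: coneD => //; apply: PC. Qed.

Lemma mink_sum_neq0 P Q : P `<=` C -> Q `<=` C -> ~ P 0 -> ~ mink_sum P Q 0.
Proof.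
move=> PC QC P0 [a [b [Pa [Qb /esym/eqP]]]]; rewrite addr_eq0 => /eqP aE.
have a0 : a = 0 by apply: pointedC; [exact: PC | rewrite aE opprK; exact: QC].
by apply: P0; rewrite -a0.
Qed.

Lemma recession_cone_sub_cone S : S !=set0 -> S `<=` C -> recession_cone S `<=` C.
Proof.
move=> [x Sx] SC y recy; rewrite ((closure_id C).1 closedC).
move=> B /nbhs_normP[r r_gt0 yrB].
(* [(x + t y) / t] lies in [C] and tends to [y] *)
pose t := `|x| / r + 1.
have t_gt0 : 0 < t by rewrite ltr_pwDr // divr_ge0 // ltW.
exists (t^-1 *: x + y); split.
  have -> : t^-1 *: x + y = t^-1 *: (x + t *: y).
    by rewrite scalerDr scalerA mulVf ?gt_eqF // scale1r.
  by apply: coneZ; [apply/SC/recy/ltW | rewrite invr_ge0 ltW].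
apply: yrB; rewrite opprD addrCA subrr addr0 normrN normrZ gtr0_norm ?invr_gt0 //.
by rewrite mulrC ltr_pdivrMr // -ltr_pdivrMl // /t mulrC ltrDl.
Qed.

Lemma boundary_sub_cone : boundary C `<=` C.
Proof. by move=> x [+ _]; rewrite -((closure_id C).1 closedC). Qed.

Lemma boundary_coneZ c (l : R) : boundary C c -> 0 < l -> boundary C (l *: c).
Proof.
move=> bc l_gt0; split; first exact/subset_closure/coneZ/ltW/l_gt0/boundary_sub_cone.
move=> /nbhs_normP[e e_gt0 lceC]; apply: bc.2; apply/nbhs_normP.
exists (e / l) => [|y cy]; first exact: divr_gt0.
have -> : y = l^-1 *: (l *: y) by rewrite scalerA mulVf ?gt_eqF // scale1r.
apply: coneZ; last by rewrite invr_ge0 ltW.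
by apply: lceC; rewrite -scalerBr normrZ gtr0_norm // mulrC -ltr_pdivlMr.
Qed.

Definition asymptotic_boundary A := forall eps : R, 0 < eps -> exists M : R,
  forall x, boundary A x -> M < enorm x -> pc_edist x (boundary C) < eps.

Definition fills_cone A := forall eps : R, 0 < eps -> exists M : R,
  forall x, C x -> M < enorm x -> far_from eps (boundary C) x -> A x.

Lemma far_from_boundary_nbhs (e : R) x :
  0 < e -> C x -> far_from e (boundary C) x -> nbhs x C.
Proof.
move=> e_gt0 Cx farx; apply: contrapT => xNint.
have := farx x (conj (subset_closure Cx) xNint).
by rewrite subrr enorm0 leNgt e_gt0.
Qed.

Lemma asymptotic_boundary_fills_cone A : closed A -> A !=set0 ->
  C `<=` recession_cone A -> boundary C !=set0 -> asymptotic_boundary A -> fills_cone A.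
Proof.
move=> clA [a Aa] CrecA bdC0 asyA eps eps_gt0.
have [M bdA_near] := asyA eps eps_gt0; exists M => x Cx Mx farx.
apply: contrapT => Ax.
(* [x + T x = a + T w] for some [w] in [C] close to [x], so the ray through [x] enters [A] *)
have /nbhs_normP[r r_gt0 xrC] := far_from_boundary_nbhs eps_gt0 Cx farx.
pose T := `|x - a| / r + 1.
have T_gt0 : 0 < T by rewrite ltr_pwDr // divr_ge0 // ltW.
have Cw : C (x + T^-1 *: (x - a)).
  apply: xrC; rewrite opprD addrA subrr add0r normrN normrZ gtr0_norm ?invr_gt0 //.
  by rewrite mulrC ltr_pdivrMr // -ltr_pdivrMl // /T mulrC ltrDl.
have ATx : A (x + T *: x).
  have -> : x + T *: x = a + T *: (x + T^-1 *: (x - a)).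
    rewrite scalerDr scalerA divff ?gt_eqF // scale1r.
    by rewrite [RHS]addrCA [a + (x - a)]addrCA subrr addr0 addrC.
  exact: CrecA Cw a T Aa (ltW T_gt0).
(* at the crossing point [(1 + s) x] the boundary of [A] is close to that of [C] *)
have [s [s_gt0 _ bdA_sx]] := segment_meets_boundary clA Ax T_gt0 ATx.
have s1_gt0 : 0 < 1 + s by rewrite addr_gt0.
have sxE : x + s *: x = (1 + s) *: x by rewrite scalerDl scale1r.
have : M < enorm (x + s *: x).
  rewrite sxE enormZ gtr0_norm //; apply: lt_le_trans Mx _.
  by rewrite ler_peMl ?enorm_ge0 // lerDl ltW.
move=> /(bdA_near _ bdA_sx)/(edist_ltP bdC0)[c bdCc sxc_lt].
have inv_gt0 : 0 < (1 + s)^-1 by rewrite invr_gt0.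
have := farx _ (boundary_coneZ bdCc inv_gt0); apply/negP; rewrite -ltNge.
have -> : x - (1 + s)^-1 *: c = (1 + s)^-1 *: (x + s *: x - c).
  by rewrite sxE scalerBr scalerA mulVf ?gt_eqF // scale1r.
rewrite enormZ gtr0_norm //; apply: le_lt_trans sxc_lt.
by rewrite ler_pdivrMl // ler_peMl ?enorm_ge0 // lerDl ltW.
Qed.

Lemma fills_cone_mink_sum P Q : fills_cone P -> fills_cone Q -> fills_cone (mink_sum P Q).
Proof.
move=> fillP fillQ eps eps_gt0.
have eps2_gt0 : 0 < eps / 2 by rewrite divr_gt0.
have [M1 fillP1] := fillP _ eps2_gt0; have [M2 fillQ2] := fillQ _ eps2_gt0.
exists (2 * Order.max M1 M2) => x Cx Mx farx.
pose h := 2^-1 *: x.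
have Ch : C h by apply: coneZ; rewrite // invr_ge0.
have Mh : Order.max M1 M2 < enorm h.
  by rewrite enormZ ger0_norm ?invr_ge0 // mulrC ltr_pdivlMr // mulrC.
have farh : far_from (eps / 2) (boundary C) h.
  move=> c bdCc; have := farx _ (boundary_coneZ bdCc (ltr0Sn R 1)).
  have -> : x - 2 *: c = 2 *: (h - c).
    by rewrite scalerBr scalerA divff ?pnatr_eq0 // scale1r.
  by rewrite enormZ ger0_norm // ler_pdivrMr // mulrC.
exists h, h; split; first by apply: fillP1 => //; apply: le_lt_trans Mh; rewrite le_max lexx.
split; first by apply: fillQ2 => //; apply: le_lt_trans Mh; rewrite le_max lexx orbT.
by rewrite -scalerDl -div1r -splitr scale1r.
Qed.

Lemma fills_cone_asymptotic_boundary S : S `<=` C -> fills_cone S -> asymptotic_boundary S.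
Proof.
move=> SC fillS eps eps_gt0.
have eps2_gt0 : 0 < eps / 2 by rewrite divr_gt0.
have [M fillM] := fillS _ eps2_gt0; exists (M + eps / 2) => p bdSp Mp.
rewrite ltNge; apply/negP => /far_from_edist farp.
have Cp : C p by rewrite ((closure_id C).1 closedC); exact: closureS SC _ bdSp.1.
(* a whole neighbourhood of [p] is far from the boundary of [C], hence inside [S] *)
apply: bdSp.2; apply/nbhs_normP.
have [d d_gt0 d_small] := enorm_small n eps2_gt0; exists d => // q /(d_small (p - q)) pq_lt.
have Cq : C q.
  apply: contrapT => Cq; have qpE : q + 1 *: (p - q) = p by rewrite scale1r addrC subrK.
  have [s [s_gt0 s_le1 bdCs]] := segment_meets_boundary closedC Cq ltr01 (eq_ind_r C Cp qpE).
  have := farp _ bdCs; apply/negP; rewrite -ltNge.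
  have -> : p - (q + s *: (p - q)) = (1 - s) *: (p - q) by rewrite scalerBl scale1r opprD addrA.
  rewrite enormZ ger0_norm ?subr_ge0 //; apply: le_lt_trans (lt_trans pq_lt _); last first.
    by rewrite ltr_pdivrMr // ltr_pMr // ltr1n.
  by rewrite ler_piMl ?enorm_ge0 // lerBlDr lerDl ltW.
apply: fillM => // [|c bdCc].
  rewrite -(ltrD2r (eps / 2)); apply: lt_le_trans Mp _.
  by rewrite -[p](subrK q) (le_trans (enormD _ _)) // addrC lerD2l ltW.
have tri : enorm (p - c) <= enorm (p - q) + enorm (q - c).
  by rewrite (_ : p - c = (p - q) + (q - c)) ?enormD // addrA subrK.
have := farp c bdCc; lra.
Qed.

Lemma asymptotic_set_mink_sum A1 A2 :
  asymptotic_set C A1 -> asymptotic_set C A2 ->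
  C `<=` recession_cone A1 -> C `<=` recession_cone A2 ->
  asymptotic_set C (mink_sum A1 A2).
Proof.
move=> [A1ub [clA1 [cvA1 [A1C [intA1 [A1N0 asyA1]]]]]].
move=> [_ [clA2 [cvA2 [A2C [intA2 [_ asyA2]]]]]] CrecA1 CrecA2.
have [[a1 /interior_subset A1a1] [a2 /interior_subset A2a2]] := (intA1, intA2).
split.
  move=> [M sumM]; apply: A1ub; exists (M + enorm a2) => a A1a.
  rewrite -[a](addrK a2) (le_trans (enormD _ _)) // enormN lerD2r.
  by apply: sumM; exists a, a2.
split; first exact: closed_mink_sum.
split; first exact: convex_mink_sum.
split; first exact: mink_sum_sub_cone.
split; first by apply: interior_mink_sum; last exists a2.
split; first exact: mink_sum_neq0.
have [bdC0|/nonemptyPn bdC0] := pselect (boundary C !=set0); last first.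
  by move=> eps eps_gt0; exists 0 => x _ _; rewrite bdC0 edist_set0.
apply: fills_cone_asymptotic_boundary; first exact: mink_sum_sub_cone.
by apply: fills_cone_mink_sum; apply: asymptotic_boundary_fills_cone => //;
  by [exists a1 | exists a2].
Qed.

Lemma pseudo_cone_mink_sum E F : E `<=` C -> F `<=` C ->
  pseudo_cone C E -> pseudo_cone C F -> pseudo_cone C (mink_sum E F).
Proof.
move=> EC FC [[e Ee] [clE [cvE [E0 [scE recE]]]]] [[f Ff] [clF [cvF [_ [scF _]]]]].
have EF0 : mink_sum E F !=set0 by exists (e + f), e, f.
split => //; split; first exact: closed_mink_sum.
split; first exact: convex_mink_sum.
split; first exact: mink_sum_neq0.
split.
  move=> _ l [a [b [Ea [Fb ->]]]] l_ge1; exists (l *: a), (l *: b).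
  by split; [exact: scE | split; [exact: scF | rewrite scalerDr]].
apply/seteqP; split; first exact: recession_cone_sub_cone EF0 (mink_sum_sub_cone EC FC).
by rewrite -{1}recE; exact: recession_cone_mink_suml.
Qed.

End PointedCone.

Theorem corollary3p2 (R : realType) (n : nat) (C Eset Fset A1 A2 : set 'rV[R]_n)
  (z1 z2 : 'rV[R]_n) :
  (2 <= n)%N -> good_cone C ->
  pseudo_cone C Eset -> pseudo_cone C Fset ->
  C z1 -> C z2 -> asymptotic_set C A1 -> asymptotic_set C A2 ->
  Eset = translate z1 A1 -> Fset = translate z2 A2 ->
  mink_sum Eset Fset = translate (z1 + z2) (mink_sum A1 A2) /\
  asymptotic_set C (mink_sum A1 A2) /\
  nondeg_pseudo_cone_start C (mink_sum Eset Fset) (z1 + z2).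
Proof.
move=> _ [coneC [pointedC _]] pE pF Cz1 Cz2 aA1 aA2 Edef Fdef.
have sumE : mink_sum Eset Fset = translate (z1 + z2) (mink_sum A1 A2).
  by rewrite Edef Fdef mink_sum_translate.
have CrecA1 : C `<=` recession_cone A1.
  by rewrite -(recession_cone_translate z1) -Edef pE.2.2.2.2.2.
have CrecA2 : C `<=` recession_cone A2.
  by rewrite -(recession_cone_translate z2) -Fdef pF.2.2.2.2.2.
have EC : Eset `<=` C by rewrite Edef; apply: translate_sub_cone aA1.2.2.2.1.
have FC : Fset `<=` C by rewrite Fdef; apply: translate_sub_cone aA2.2.2.2.1.
have aS := asymptotic_set_mink_sum coneC pointedC aA1 aA2 CrecA1 CrecA2.
split => //; split => //; split; first exact: pseudo_cone_mink_sum.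
by split; [exact: coneC.2.2.1 | exists (mink_sum A1 A2)].
Qed.
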